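(* Let $f:H_0\to H_1$ be an injective homomorphism of free left $\bar k[\sigma]$-modules of finite rank with $n:=\dim_{\bar k}\operatorname{coker}(f)<\infty$. Then $\#\ker\big(f\bmod(\sigma-1)\big)\le q^n$, with equality if and only if $f\bmod\sigma$ is bijective.
   Context: $\bar k$ is the algebraic closure of $k=\mathbb F_q(T)$ (a perfect field). $\bar k[\sigma]$ is the noncommutative polynomial ring over $\bar k$ in $\sigma$ with $\sigma x=x^{q^{-1}}\sigma$ for $x\in\bar k$. For a homomorphism $f:H_0\to H_1$ of left $\bar k[\sigma]$-modules, $f\bmod\sigma:H_0/\sigma H_0\to H_1/\sigma H_1$ and $f\bmod(\sigma-1):H_0/(\sigma-1)H_0\to H_1/(\sigma-1)H_1$ are the induced maps. *)

From HB Require Import structures.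
From mathcomp Require Import all_boot all_order all_algebra.
Set Implicit Arguments. Unset Strict Implicit. Unset Printing Implicit Defensive.
Import GRing.Theory.
Local Open Scope ring_scope.

(* The skew polynomial ring kbar[sigma], with sigma x = tau x * sigma,       *)
(* where tau x = x^(q^-1).  An element  sum_i a_i sigma^i  is stored as the  *)
(* coefficient sequence of a {poly K} (only the additive structure of        *)
(* {poly K} is used; the multiplication is the skew one below).              *)
Definition skmul (K : fieldType) (tau : K -> K) (a b : {poly K}) : {poly K} :=
  \sum_(i < size a) \sum_(j < size b) (a`_i * iter i tau b`_j) *: 'X^(i + j).

(* The free left kbar[sigma]-module of rank r is kbar[sigma]^r, realised as *)
Definition smul (K : fieldType) (tau : K -> K) (r : nat) (a : {poly K})
  (v : 'rV[{poly K}]_r) : 'rV[{poly K}]_r := map_mx (skmul tau a) v.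

Definition skew_hom (K : fieldType) (tau : K -> K) (r0 r1 : nat)
  (f : 'rV[{poly K}]_r0 -> 'rV[{poly K}]_r1) : Prop :=
  ((forall v w, f (v + w) = f v + f w) /\
  (forall a v, f (smul tau a v) = smul tau a (f v))).

Definition in_aH (K : fieldType) (tau : K -> K) (r : nat) (a : {poly K})
  (w : 'rV[{poly K}]_r) : Prop := exists u, w = smul tau a u.

(* dim_kbar coker f = n : there are w_1..w_n in H1 whose classes form a     *)
(* kbar-basis of H1 / f(H0).  (kbar acts through constants c%:P = c sigma^0) *)
Definition coker_dim (K : fieldType) (r0 r1 : nat)
  (f : 'rV[{poly K}]_r0 -> 'rV[{poly K}]_r1) (n : nat) : Prop :=
  exists w : 'I_n -> 'rV[{poly K}]_r1,
    (forall x : 'rV[{poly K}]_r1, exists (c : 'I_n -> K) (v : 'rV[{poly K}]_r0),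
        x = \sum_(i < n) (c i)%:P *: w i + f v) /\
    (forall c : 'I_n -> K,
        (exists v, \sum_(i < n) (c i)%:P *: w i = f v) -> forall i, c i = 0).

(* Cardinality of a quotient S/E (S a predicate, E an equivalence on S):   *)
(* #(S/E) <= N  iff every family of pairwise E-inequivalent elements of S   *)
(* has at most N members; #(S/E) = N iff moreover such a family of exactly  *)
(* N members exists.                                                         *)
Definition quot_card_le (T : Type) (S : T -> Prop) (E : T -> T -> Prop)
  (N : nat) : Prop :=
  forall (m : nat) (x : 'I_m -> T), (forall i, S (x i)) ->
    (forall i j, i != j -> ~ E (x i) (x j)) -> (m <= N)%N.

Definition quot_card_eq (T : Type) (S : T -> Prop) (E : T -> T -> Prop)
  (N : nat) : Prop :=
  quot_card_le S E N /\
  exists x : 'I_N -> T, (forall i, S (x i)) /\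
    (forall i j, i != j -> ~ E (x i) (x j)).

(* ker (f mod (sigma - 1)) : classes v + (sigma-1)H0 with f v in (sigma-1)H1 *)
Definition ker_mod_sm1 (K : fieldType) (tau : K -> K) (r0 r1 : nat)
  (f : 'rV[{poly K}]_r0 -> 'rV[{poly K}]_r1) (v : 'rV[{poly K}]_r0) : Prop :=
  in_aH tau ('X - 1) (f v).

Definition cong_mod_sm1 (K : fieldType) (tau : K -> K) (r0 : nat)
  (v v' : 'rV[{poly K}]_r0) : Prop :=
  in_aH tau ('X - 1) (v - v').

Definition mod_sigma_bijective (K : fieldType) (tau : K -> K) (r0 r1 : nat)
  (f : 'rV[{poly K}]_r0 -> 'rV[{poly K}]_r1) : Prop :=
  (forall v v', in_aH tau 'X (f v - f v') -> in_aH tau 'X (v - v')) /\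
  (forall w, exists v, in_aH tau 'X (w - f v)).

(* Lift a kbar-basis of coker f to w_1, ..., w_n in H1 and write
   sigma w_j = \sum_k B_jk w_k + f (U_j) with B a square matrix over kbar.
   Since f is injective, a class v of ker (f mod (sigma - 1)), i.e.
   f v = (sigma - 1) h, is determined modulo (sigma - 1) H0 by the coordinates
   c of h in coker f, and these coordinates are exactly the row vectors with
   tau(c) B = c.  Such c lie in the row space of B and have coordinates in F_q
   with respect to any maximal free family of solutions, so there are at most
   q^(rank B) <= q^n of them.  Moreover f mod sigma is bijective iff B is
   invertible, and then Lang's theorem, tau(P) B = P for some invertible P
   (built from a nonzero fixed row and Artin-Schreier equations), produces
   q^n solutions. *)

From HB Require Import structures.
From mathcomp Require Import all_boot all_order all_algebra all_field.
From mathcomp Require Import fraction ring zify.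
Import GRing.Theory.
Local Open Scope ring_scope.

Lemma subrACA {V : zmodType} (a b c d : V) : (a - b) - (c - d) = (a - c) - (b - d).
Proof. by rewrite !opprD !opprK addrACA. Qed.

Section FirstLinearDependence.

Variables (K : fieldType) (N : nat) (v : nat -> 'rV[K]_N).

Local Notation span k := (\sum_(i < k) <<v i>>)%MS.

Lemma rank_span_free k :
  (forall i, (i < k)%N -> ~~ (v i <= span i)%MS) -> (k <= \rank (span k))%N.
Proof.
elim: k => [|k IHk] free //.
rewrite big_ord_recr /=; apply: leq_ltn_trans (IHk _) (rank_ltmx _).
  by move=> i /ltnW; apply: free.
rewrite ltmxE addsmxSl /=; apply: contra (free k (ltnSn k)) => sub.
by apply: submx_trans sub; rewrite -genmxE addsmxSr.
Qed.

Lemma first_linear_dependence : v 0 != 0 ->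
  exists m (a : nat -> K),
    v m.+1 = \sum_(i < m.+1) a i *: v i /\ ~~ (v m <= span m)%MS.
Proof.
move=> v0_neq0.
have [k dep] : exists k : 'I_N.+1, (v k <= span k)%MS.
  apply/existsP; apply: contraT; rewrite negb_exists => /forallP free.
  have := rank_leq_col (span N.+1).
  by rewrite leqNgt (@rank_span_free N.+1) // => i lti; apply: (free (Ordinal lti)).
have ex_dep : exists k : nat, (v k <= span k)%MS by exists k.
have [[|m] dep_m min_m] := ex_minnP ex_dep.
  by move: dep_m; rewrite big_ord0 submx0 (negbTE v0_neq0).
have [u vE] := sub_sumsmxP dep_m.
have /fin_all_exists [c cE] : forall i, exists c, u i *m <<v i>>%MS = c *: v i.
  move=> i; apply/sub_rVP.
  by apply: submx_trans (submxMl _ _) _; rewrite genmxE.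
exists m, (fun i => c (inord i)); split.
  by rewrite vE; apply: eq_bigr => i _; rewrite cE inord_val.
by apply/negP => /min_m; rewrite ltnn.
Qed.

End FirstLinearDependence.

Lemma exists_unitmx_col_mx {K : fieldType} {N} {x : 'rV[K]_N.+1} :
  x != 0 -> exists D : 'M[K]_(N, N.+1), col_mx x D \in unitmx.
Proof.
move=> x_neq0; have [j xj] : exists j, x 0 j != 0.
  apply/existsP; apply: contraR x_neq0; rewrite negb_exists => /forallP x0.
  by apply/eqP/rowP => k; rewrite mxE; apply/eqP/negbNE/x0.
pose D : 'M[K]_(N, N.+1) := \matrix_(k, l) (l == lift j k)%:R; exists D.
rewrite -row_free_unit -kermx_eq0; apply/rowV0P => w; rewrite sub_kermx => /eqP.
rewrite -[w]hsubmxK mul_row_col; set a := lsubmx w; set b := rsubmx w => wQ.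
have a0 : a = 0.
  move/rowP: (wQ) => /(_ j); rewrite !mxE big_ord1 big1 ?addr0 => [/eqP|k _].
    rewrite mulf_eq0 (negbTE xj) orbF => /eqP a00.
    by apply/matrixP => i i'; rewrite !ord1 a00 mxE.
  by rewrite [D k j]mxE (negbTE (neq_lift j k)) mulr0.
have b0 : b = 0.
  apply/rowP => k; rewrite [RHS]mxE; move: wQ; rewrite a0 mul0mx add0r.
  move=> /rowP/(_ (lift j k)); rewrite !mxE (bigD1 k) //= [D k _]mxE eqxx mulr1.
  rewrite big1 ?addr0 => [<-|k' k'k]; first by rewrite /b mxE.
  by rewrite [D k' _]mxE (inj_eq (@lift_inj _ j)) eq_sym (negbTE k'k) mulr0.
by rewrite a0 b0 row_mx0.
Qed.

Section InverseFrobenius.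

Context {F : finFieldType} {K : closedFieldType} (g : {rmorphism F -> K}) {tau : K -> K}.
Hypothesis tauK : forall x : K, tau x ^+ #|F| = x.

Local Notation q := #|F|.

Lemma card_finField_gt1 : (1 < q)%N.
Proof. by apply/card_gt1P; exists 0, 1; rewrite eq_sym oner_eq0. Qed.

Lemma card_pchar_nat : [pchar K].-nat q.
Proof.
have [p p_pr pF] := finPcharP F.
rewrite (card_pprimeChar pF) pnatX (eq_pnat _ (pcharf_eq (rmorph_pchar g pF))).
by rewrite pnat_id.
Qed.

Definition frob (x : K) := x ^+ q.

Lemma frob_is_zmod_morphism : zmod_morphism frob.
Proof.
move=> x y; apply/eqP; rewrite /frob eq_sym subr_eq.
by rewrite -exprDn_pchar ?subrK // card_pchar_nat.
Qed.

Lemma frob_is_monoid_morphism : monoid_morphism frob.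
Proof. by split=> [|x y]; rewrite /frob ?expr1n ?exprMn. Qed.

HB.instance Definition _ := GRing.isZmodMorphism.Build K K frob frob_is_zmod_morphism.
HB.instance Definition _ := GRing.isMonoidMorphism.Build K K frob frob_is_monoid_morphism.

Lemma frob_inj : injective frob. Proof. exact: fmorph_inj. Qed.

Lemma tauKV x : tau (x ^+ q) = x.
Proof. by apply: frob_inj; rewrite /frob tauK. Qed.

Definition invfrob := tau.

Lemma invfrob_is_zmod_morphism : zmod_morphism invfrob.
Proof. by move=> x y; apply: frob_inj; rewrite rmorphB /= /frob /invfrob !tauK. Qed.

Lemma invfrob_is_monoid_morphism : monoid_morphism invfrob.
Proof.
by split=> [|x y]; apply: frob_inj; rewrite /frob /invfrob ?expr1n ?exprMn !tauK.
Qed.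

HB.instance Definition _ :=
  GRing.isZmodMorphism.Build K K invfrob invfrob_is_zmod_morphism.
HB.instance Definition _ :=
  GRing.isMonoidMorphism.Build K K invfrob invfrob_is_monoid_morphism.

Lemma tauB x y : tau (x - y) = tau x - tau y. Proof. exact: (rmorphB invfrob). Qed.

Lemma tau_fixE x : (tau x == x) = (x ^+ q == x).
Proof. by apply/eqP/eqP => h; rewrite -{1}h ?tauK ?tauKV. Qed.

Lemma tau_fix_rmorph a : tau (g a) = g a.
Proof. by apply/eqP; rewrite tau_fixE -rmorphXn expf_card. Qed.

(* The q + 1 distinct roots x and g a of 'X^q - 'X would be too many. *)
Lemma tau_fix_in_image x : tau x = x -> exists a, g a = x.
Proof.
move/eqP; rewrite tau_fixE => /eqP xq.
have [a /eqP <-|gx] := pickP (fun a => g a == x); first by exists a.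
pose P : {poly K} := 'X^q - 'X.
have szP : size P = q.+1.
  by rewrite /P size_polyDl ?size_polyXn // size_polyN size_polyX ltnS card_finField_gt1.
have rootP y : y ^+ q = y -> root P y by rewrite /root /P !hornerE => ->; rewrite subrr.
have roots : all (root P) (x :: map g (enum F)).
  rewrite /= rootP //=; apply/allP => _ /mapP [a _ ->].
  by rewrite rootP // -rmorphXn expf_card.
have uniq_roots : uniq (x :: map g (enum F)).
  rewrite /= (map_inj_uniq (fmorph_inj g)) enum_uniq andbT.
  by apply/mapP => -[a _ ga]; have := gx a; rewrite ga eqxx.
have P_neq0 : P != 0 by rewrite -size_poly_eq0 szP.
by have := max_poly_roots P_neq0 roots uniq_roots; rewrite /= size_map -cardE szP ltnn.
Qed.

Lemma artin_schreier b : exists s, s - tau s = b.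
Proof.
pose P : {poly K} := 'X^q - 'X - (b ^+ q)%:P.
have szP : size P = q.+1.
  rewrite /P -addrA size_polyDl ?size_polyXn // -opprD size_polyN.
  rewrite size_polyDl ?size_polyX ?size_polyC; last by case: (b ^+ q == 0).
  by rewrite ltnS card_finField_gt1.
have [s] : exists s, root P s by apply/closed_rootP; rewrite szP; case: q card_finField_gt1 => [|[]].
rewrite /root /P !hornerE subr_eq0 => /eqP sq; exists s.
by rewrite -(tauKV b) -sq tauB tauKV.
Qed.

(* If [v (m.+1) = \sum_(i <= m) a i *: v i] for the iterates [v] of a
   q-semilinear map, then [\sum_(i <= m) lang_seq a z i *: v i] is fixed as
   soon as [lang_seq a z m = z].  As [lang_seq a z i = z^2 * (lang_poly a i).[z]],
   a nonzero such [z] is a root of ['X * lang_poly a m - 1]. *)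
Local Notation d := (q - 2)%N.

Fixpoint lang_seq (a : nat -> K) (z : K) (i : nat) : K :=
  if i is i'.+1 then lang_seq a z i' ^+ q + a i * z ^+ q else a 0%N * z ^+ q.

Fixpoint lang_poly (a : nat -> K) (i : nat) : {poly K} :=
  if i is i'.+1 then 'X^(q + d) * lang_poly a i' ^+ q + (a i)%:P * 'X^d
  else (a 0%N)%:P * 'X^d.

Lemma horner_lang_poly a z i : z ^+ 2 * (lang_poly a i).[z] = lang_seq a z i.
Proof.
have zq : z ^+ q = z ^+ 2 * z ^+ d by rewrite -exprD subnKC ?card_finField_gt1.
elim: i => [|i IHi] /=; first by rewrite hornerCM hornerXn zq; ring.
have z2q : z ^+ (2 * q) = z ^+ 2 * z ^+ (q + d).
  by rewrite -exprD; congr (_ ^+ _); have := card_finField_gt1; lia.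
rewrite -IHi hornerD hornerM hornerCM !hornerXn horner_exp exprMn -exprM z2q zq.
ring.
Qed.

Lemma lang_poly_neq0 {a k i} : (k <= i)%N -> a k != 0 -> lang_poly a i != 0.
Proof.
move=> + ak_neq0; have Xd_neq0 : 'X^d != 0 :> {poly K} by rewrite monic_neq0 ?monicXn.
elim: i => [|i IHi]; first by rewrite leqn0 => /eqP k0; rewrite /= mulf_neq0 // polyC_eq0 -k0.
have step : lang_poly a i != 0 -> lang_poly a i.+1 != 0.
  move=> Hi_neq0; have Hq_neq0 : lang_poly a i ^+ q != 0 := expf_neq0 _ Hi_neq0.
  have szC : (size ((a i.+1)%:P * 'X^d)%R <= d.+1)%N.
    by rewrite mul_polyC (leq_trans (size_scale_leq _ _)) // size_polyXn.
  have szH : size ('X^(q + d) * lang_poly a i ^+ q) = (q + d + size (lang_poly a i ^+ q))%N.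
    by rewrite mulrC size_mulXn.
  rewrite /= -size_poly_eq0 size_polyDl szH -?lt0n; last rewrite (leq_ltn_trans szC);
    by move: Hq_neq0; rewrite -size_poly_gt0; have := card_finField_gt1; lia.
rewrite leq_eqVlt ltnS => /orP[/eqP k_eq|/IHi/step//].
have [Hi0|/step//] := eqVneq (lang_poly a i) 0.
by rewrite /= Hi0 expr0n gtn_eqF ?(ltnW card_finField_gt1) // mulr0 add0r mulf_neq0 ?polyC_eq0 -?k_eq.
Qed.

Lemma exists_lang_seq_fixed {a k m} : (k <= m)%N -> a k != 0 ->
  exists2 z, z != 0 & lang_seq a z m = z.
Proof.
move=> le_km ak_neq0; have H_neq0 := lang_poly_neq0 le_km ak_neq0.
have [z] : exists z, root ('X * lang_poly a m - 1) z.
  apply/closed_rootP; rewrite size_polyDl mulrC size_mulX //.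
    by rewrite eqSS size_poly_eq0.
  by rewrite size_polyN size_poly1 ltnS lt0n size_poly_eq0.
rewrite /root !hornerE subr_eq0 => /eqP zH.
exists z; first by apply: contra_eq_neq zH => ->; rewrite mul0r eq_sym oner_neq0.
by rewrite -horner_lang_poly expr2 -mulrA zH mulr1.
Qed.

Local Notation "A ^tau" := (map_mx invfrob A) (at level 2, format "A ^tau").
Local Notation "A ^frob" := (map_mx frob A) (at level 2, format "A ^frob").

Lemma map_mx_frobK m n (A : 'M[K]_(m, n)) : A^frob^tau = A.
Proof. by apply/matrixP => i j; rewrite !mxE /invfrob tauKV. Qed.

Section TauFixedRow.

Context {N : nat} {B : 'M[K]_N.+1}.
Hypothesis B_unit : B \in unitmx.

Let rho (y : 'rV[K]_N.+1) := (y *m invmx B)^frob.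

Let rho_sum k (G : 'I_k -> 'rV[K]_N.+1) : rho (\sum_(i < k) G i) = \sum_(i < k) rho (G i).
Proof. by rewrite /rho mulmx_suml map_mx_sum. Qed.

Let rhoZ a y : rho (a *: y) = a ^+ q *: rho y.
Proof. by rewrite /rho -scalemxAl map_mxZ. Qed.

Let rho_eq0 y : (rho y == 0) = (y == 0).
Proof.
rewrite /rho map_mx_eq0; apply/eqP/eqP => [y0|->]; last by rewrite mul0mx.
by rewrite -(mulmxKV B_unit y) y0 mul0mx.
Qed.

Let rho_fixed y : rho y = y -> y^tau *m B = y.
Proof. by move=> rho_y; rewrite -{1}rho_y map_mx_frobK mulmxKV. Qed.

Lemma exists_tau_fixed_row : exists2 x : 'rV[K]_N.+1, x != 0 & x^tau *m B = x.
Proof.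
pose v k := iter k rho (delta_mx 0 0).
have v_neq0 k : v k != 0.
  elim: k => [|k IHk] /=; last by rewrite rho_eq0.
  by apply/eqP => /matrixP/(_ 0 0); rewrite !mxE eqxx => /eqP; rewrite oner_eq0.
have [m [a [vSm vm_free]]] := @first_linear_dependence _ _ v (v_neq0 0).
have /existsP [k ak_neq0] : [exists k : 'I_m.+1, a k != 0].
  apply: contraT; rewrite negb_exists => /forallP a0.
  have := v_neq0 m.+1; rewrite vSm big1 ?eqxx // => i _.
  by rewrite (eqP (negbNE (a0 i))) scale0r.
have [z z_neq0 Ym] := exists_lang_seq_fixed (ltn_ord k : (k <= m)%N) ak_neq0.
pose x := \sum_(i < m.+1) lang_seq a z i *: v i.
exists x.
  apply: contra vm_free; rewrite /x big_ord_recr /= Ym addrC addr_eq0 => /eqP zvm.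
  have -> : v m = - z^-1 *: \sum_(i < m) lang_seq a z i *: v i.
    by rewrite scaleNr -scalerN -zvm scalerA mulVf ?scale1r.
  rewrite scalemx_sub // summx_sub // => i _.
  by rewrite scalemx_sub // (sumsmx_sup i) // genmxE.
apply: rho_fixed; rewrite rho_sum.
under eq_bigr => i _ do rewrite rhoZ.
have rho_v i : rho (v i) = v i.+1 by [].
rewrite big_ord_recr /= Ym !rho_v vSm scaler_sumr big_ord_recl [x]big_ord_recl /=.
rewrite addrCA -big_split /=; congr (_ + _); first by rewrite scalerA mulrC.
by apply: eq_bigr => i _; rewrite /bump leq0n add1n !add0n scalerDl scalerA mulrC.
Qed.

End TauFixedRow.

Lemma lang_block {N} (C : 'cV[K]_N) {E P : 'M[K]_N} :
  P \in unitmx -> P^tau *m E = P ->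
  exists2 P', P' \in unitmx & P'^tau *m block_mx 1%:M 0 C E = P'.
Proof.
move=> P_unit PE.
have /fin_all_exists [s sE] : forall i, exists s, s - tau s = (P^tau *m C) i 0.
  by move=> i; apply: artin_schreier.
exists (block_mx 1%:M 0 (\col_i s i) P).
  by rewrite unitmxE det_lblock det1 mul1r -unitmxE.
rewrite map_block_mx map_mx1 map_mx0 mulmx_block !mul1mx !mul0mx !mulmx0 !addr0.
rewrite add0r mulmx1 PE; congr block_mx.
by apply/colP => i; have := sE i; rewrite !mxE => <-; rewrite /invfrob addrC subrK.
Qed.

Theorem lang {N} {B : 'M[K]_N} : B \in unitmx -> exists2 P, P \in unitmx & P^tau *m B = P.
Proof.
elim: N B => [|N IHN] B B_unit.
  by exists 1%:M; [exact: unitmx1 | apply/matrixP => -[]].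
have [x x_neq0 xB] := exists_tau_fixed_row B_unit.
have [D Q_unit] := exists_unitmx_col_mx x_neq0.
pose Q : 'M_(1 + N) := col_mx x D.
pose B' := Q^tau *m B *m invmx Q.
have QB : Q^tau *m B = B' *m Q by rewrite mulmxKV.
have B'_unit : B' \in unitmx.
  rewrite !unitmx_mul B_unit unitmx_inv Q_unit !andbT unitmxE det_map_mx unitfE.
  by rewrite fmorph_eq0 -unitfE -unitmxE.
have B'E : B' = block_mx 1%:M 0 (dlsubmx B') (drsubmx B').
  have B'u : usubmx B' = row_mx 1%:M 0.
    rewrite -!mul_usub_mx map_col_mx col_mxKu xB.
    have : usubmx (Q *m invmx Q) = x *m invmx Q by rewrite -mul_usub_mx col_mxKu.
    by rewrite mulmxV // (scalar_mx_block 1 N) /block_mx col_mxKu => <-.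
  by rewrite -{1}[B']submxK /ulsubmx /ursubmx B'u row_mxKl row_mxKr.
have E_unit : drsubmx B' \in unitmx.
  by move: B'_unit; rewrite {1}B'E !unitmxE det_lblock det1 mul1r.
have [P P_unit PE] := IHN _ E_unit.
have [P' P'_unit P'B'] := lang_block (dlsubmx B') P_unit PE.
exists (P' *m Q); first by rewrite unitmx_mul P'_unit.
by rewrite map_mxM -mulmxA QB mulmxA {1}B'E P'B'.
Qed.

Lemma tau_fixed_row_image {n} {a : 'rV[K]_n} :
  a^tau = a -> exists phi : {ffun 'I_n -> F}, a = \row_k g (phi k).
Proof.
move=> /rowP a_fixed.
have /fin_all_exists [phi phiE] : forall k, exists b, g b = a 0 k.
  by move=> k; apply: tau_fix_in_image; have := a_fixed k; rewrite mxE.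
by exists [ffun k => phi k]; apply/rowP => k; rewrite !mxE ffunE phiE.
Qed.

Lemma card_tau_fixed_rows_le n (B : 'M[K]_n) m (c : 'I_m -> 'rV[K]_n) :
  (forall i, (c i)^tau *m B = c i) -> injective c -> (m <= q ^ \rank B)%N.
Proof.
move=> c_fixed c_inj; pose X : 'M[K]_(m, n) := \matrix_i c i.
have XB : X^tau *m B = X.
  by apply/row_matrixP => i; rewrite row_mul -map_row rowK c_fixed.
(* Every solution is [a *m T], for [T] a maximal free subfamily, with [a^tau = a]. *)
pose T := rowsub (maxrankfun X) X.
have TB : T^tau *m B = T.
  have -> : T^tau = rowsub (maxrankfun X) X^tau by apply/matrixP => i j; rewrite !mxE.
  by rewrite mul_rowsub_mx XB.
have /fin_all_exists [a cE] : forall i, exists a : 'rV[K]_(\rank X), c i = a *m T.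
  by move=> i; apply/submxP; rewrite (eq_maxrowsub X) -(rowK c i) row_sub.
have a_fixed i : (a i)^tau = a i.
  apply: (row_free_inj (maxrowsub_free X)); rewrite -/T.
  by rewrite -{1}TB mulmxA -map_mxM -cE c_fixed cE.
have /fin_all_exists [phi phiE] := fun i => tau_fixed_row_image (a_fixed i).
have phi_inj : injective phi.
  by move=> i j phi_ij; apply: c_inj; rewrite !cE !phiE phi_ij.
have := leq_card phi phi_inj; rewrite card_ffun !card_ord => /leq_trans; apply.
rewrite leq_exp2l ?card_finField_gt1 //.
by rewrite -{1}XB mxrankM_maxr.
Qed.

Lemma exists_tau_fixed_rows {n} {B : 'M[K]_n} : B \in unitmx ->
  exists c : 'I_(q ^ n) -> 'rV[K]_n, (forall i, (c i)^tau *m B = c i) /\ injective c.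
Proof.
move=> B_unit; have [P P_unit PB] := lang B_unit.
have card_rows : #|{ffun 'I_n -> F}| = (q ^ n)%N by rewrite card_ffun card_ord.
pose coords i := enum_val (cast_ord (esym card_rows) i).
have coords_inj : injective coords by move=> i j /enum_val_inj/cast_ord_inj.
exists (fun i => (\row_k g (coords i k)) *m P); split.
  move=> i; rewrite map_mxM -mulmxA PB; congr (_ *m _).
  by apply/rowP => k; rewrite !mxE /= /invfrob tau_fix_rmorph.
have P_free : row_free P by rewrite row_free_unit.
move=> i j /(row_free_inj P_free)/rowP coords_ij.
apply/coords_inj/ffunP => k.
by apply: (fmorph_inj g); have := coords_ij k; rewrite !mxE.
Qed.

Local Notation tauP := (map_poly invfrob).

Lemma skmulX b : skmul tau 'X b = tauP b * 'X.
Proof.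
rewrite /skmul size_polyX !big_ord_recl big_ord0 addr0 /=.
rewrite big1 ?add0r => [|j _]; last by rewrite coefX mul0r scale0r.
rewrite /map_poly poly_def mulr_suml; apply: eq_bigr => j _.
by rewrite coefX mul1r -scalerAl -exprSr.
Qed.

Lemma skmulC c b : skmul tau c%:P b = c%:P * b.
Proof.
rewrite /skmul size_polyC; have [->|_] := eqVneq c 0; first by rewrite big_ord0 mul0r.
rewrite big_ord1 -[in RHS](coefK b) poly_def mulr_sumr; apply: eq_bigr => j _.
by rewrite coefC /= mul_polyC scalerA.
Qed.

Lemma skmulXsub1 b : skmul tau ('X - 1) b = tauP b * 'X - b.
Proof.
rewrite /skmul -polyC1 size_XsubC !big_ord_recl big_ord0 addr0 /= addrC; congr (_ + _).
  rewrite /map_poly poly_def mulr_suml; apply: eq_bigr => j _.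
  by rewrite coefB coefX coefC subr0 mul1r -scalerAl -exprSr.
rewrite -[in RHS](coefK b) poly_def -sumrN; apply: eq_bigr => j _.
by rewrite coefB coefX coefC sub0r mulN1r scaleNr.
Qed.

Definition sigma_row {r} (v : 'rV[{poly K}]_r) := 'X *: map_mx tauP v.

Lemma smulX r (v : 'rV_r) : smul tau 'X v = sigma_row v.
Proof. by apply/rowP => j; rewrite !mxE skmulX mulrC. Qed.

Lemma smulC r c (v : 'rV_r) : smul tau c%:P v = c%:P *: v.
Proof. by apply/rowP => j; rewrite !mxE skmulC. Qed.

Lemma smulXsub1 r (v : 'rV_r) : smul tau ('X - 1) v = sigma_row v - v.
Proof. by apply/rowP => j; rewrite !mxE skmulXsub1 mulrC. Qed.

Lemma sigma_rowD r (v w : 'rV_r) : sigma_row (v + w) = sigma_row v + sigma_row w.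
Proof. by rewrite /sigma_row map_mxD scalerDr. Qed.

Lemma sigma_rowB r (v w : 'rV_r) : sigma_row (v - w) = sigma_row v - sigma_row w.
Proof. by rewrite /sigma_row map_mxB scalerBr. Qed.

Lemma sigma_row_sum r m (G : 'I_m -> 'rV_r) :
  sigma_row (\sum_(i < m) G i) = \sum_(i < m) sigma_row (G i).
Proof. by rewrite /sigma_row map_mx_sum scaler_sumr. Qed.

Lemma sigma_rowC r c (v : 'rV_r) : sigma_row (c%:P *: v) = (tau c)%:P *: sigma_row v.
Proof. by rewrite /sigma_row map_mxZ /= map_polyC !scalerA mulrC. Qed.

Lemma sigma_row_eq0 r (v : 'rV_r) : sigma_row v = 0 -> v = 0.
Proof.
move/eqP; rewrite scalemx_eq0 polyX_eq0 /= => /eqP/rowP v0; apply/rowP => j.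
by apply: (map_poly_inj invfrob); have := v0 j; rewrite !mxE rmorph0.
Qed.

(* Entrywise [p = 'X * tauP p], and the right side is one degree larger. *)
Lemma sigma_row_fixed r (v : 'rV_r) : sigma_row v = v -> v = 0.
Proof.
move/rowP => v_fixed; apply/rowP => j; rewrite mxE.
have [//|p_neq0] := eqVneq (v 0 j) 0.
have := congr1 (fun p : {poly K} => size p) (v_fixed j); rewrite !mxE mulrC size_mulX ?map_poly_eq0 //.
by rewrite size_map_poly => /esym/n_Sn.
Qed.

Section Cokernel.

Context {r0 r1 : nat} {f : 'rV[{poly K}]_r0 -> 'rV[{poly K}]_r1}.
Hypotheses (f_hom : skew_hom tau f) (f_inj : injective f).
Context {n : nat} {w : 'I_n -> 'rV[{poly K}]_r1}.
Hypothesis w_span : forall x, exists (c : 'I_n -> K) (v : 'rV[{poly K}]_r0),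
  x = \sum_(i < n) (c i)%:P *: w i + f v.
Hypothesis w_free : forall c : 'I_n -> K,
  (exists v, \sum_(i < n) (c i)%:P *: w i = f v) -> forall i, c i = 0.

Lemma fD v v' : f (v + v') = f v + f v'. Proof. exact: f_hom.1. Qed.

Lemma f0 : f 0 = 0.
Proof. by apply: (addrI (f 0)); rewrite -fD !addr0. Qed.

Lemma fB v v' : f (v - v') = f v - f v'.
Proof. by apply: (addIr (f v')); rewrite -fD !subrK. Qed.

Lemma f_sum m (G : 'I_m -> 'rV_r0) : f (\sum_(i < m) G i) = \sum_(i < m) f (G i).
Proof. exact: (big_morph f fD f0). Qed.

Lemma f_sigma v : f (sigma_row v) = sigma_row (f v).
Proof. by rewrite -!smulX f_hom.2. Qed.

Lemma fC c v : f (c%:P *: v) = c%:P *: f v.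
Proof. by rewrite -!smulC f_hom.2. Qed.

Definition lincomb {r} (u : 'I_n -> 'rV[{poly K}]_r) (c : 'rV[K]_n) :=
  map_mx polyC c *m \matrix_i u i.

Lemma lincombE r (u : 'I_n -> 'rV_r) c : lincomb u c = \sum_i (c 0 i)%:P *: u i.
Proof. by rewrite /lincomb mulmx_sum_row; apply: eq_bigr => i _; rewrite rowK mxE. Qed.

Lemma lincombB r (u : 'I_n -> 'rV_r) c c' :
  lincomb u (c - c') = lincomb u c - lincomb u c'.
Proof. by rewrite /lincomb map_mxB mulmxBl. Qed.

Lemma lincomb0 r (u : 'I_n -> 'rV_r) : lincomb u 0 = 0.
Proof. by rewrite -(subrr 0) lincombB subrr. Qed.

Lemma lincomb_mulmx r (u : 'I_n -> 'rV_r) c (A : 'M_n) :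
  lincomb u (c *m A) = \sum_j (c 0 j)%:P *: lincomb u (row j A).
Proof.
rewrite mulmx_sum_row /lincomb map_mx_sum mulmx_suml; apply: eq_bigr => j _.
by rewrite map_mxZ -scalemxAl.
Qed.

Lemma decomp x : exists c v, x = lincomb w c + f v.
Proof.
have [c [v ->]] := w_span x; exists (\row_i c i), v.
by rewrite lincombE; congr (_ + _); apply: eq_bigr => i _; rewrite mxE.
Qed.

Lemma lincomb_eq_f c v : lincomb w c = f v -> c = 0.
Proof.
move=> cv; apply/rowP => i; rewrite mxE.
by apply: (w_free (fun i => c 0 i)); exists v; rewrite -lincombE.
Qed.

Lemma lincomb_f_inj c c' v v' :
  lincomb w c + f v = lincomb w c' + f v' -> c = c' /\ v = v'.
Proof.
move=> eq_cv.
have : lincomb w (c - c') = f (v' - v).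
  by rewrite lincombB fB; apply/eqP; rewrite subr_eq addrAC eq_sym subr_eq addrC eq_cv.
move/lincomb_eq_f/eqP; rewrite subr_eq0 => /eqP cc'; split=> //.
by apply: f_inj; move: eq_cv; rewrite cc' => /addrI.
Qed.

Lemma exists_sigma_matrix : exists (B : 'M[K]_n) (U : 'I_n -> 'rV[{poly K}]_r0),
  forall j, sigma_row (w j) = lincomb w (row j B) + f (U j).
Proof.
have /fin_all_exists [cv cvE] : forall j, exists cv : 'rV[K]_n * 'rV[{poly K}]_r0,
    sigma_row (w j) = lincomb w cv.1 + f cv.2.
  by move=> j; have [c [v ->]] := decomp (sigma_row (w j)); exists (c, v).
by exists (\matrix_j (cv j).1), (fun j => (cv j).2) => j; rewrite rowK.
Qed.

Section SigmaMatrix.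

Context {B : 'M[K]_n} {U : 'I_n -> 'rV[{poly K}]_r0}.
Hypothesis sigma_w : forall j, sigma_row (w j) = lincomb w (row j B) + f (U j).

Lemma sigma_lincomb c :
  sigma_row (lincomb w c) = lincomb w (c^tau *m B) + f (lincomb U c^tau).
Proof.
rewrite lincomb_mulmx !lincombE f_sum sigma_row_sum -big_split; apply: eq_bigr => j _.
by rewrite sigma_rowC sigma_w scalerDr fC mxE.
Qed.

Definition ker_coord v c :=
  exists2 h, f v = sigma_row h - h & exists u, h = lincomb w c + f u.

Lemma ker_coord_fixed {v} :
  ker_mod_sm1 tau f v -> exists2 c, c^tau *m B = c & ker_coord v c.
Proof.
case=> h; rewrite smulXsub1 => fv; have [c [u hE]] := decomp h.
exists c; last by exists h => //; exists u.
have fvE : f v = lincomb w (c^tau *m B - c) + f (lincomb U c^tau + sigma_row u - u).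
  by rewrite fv hE sigma_rowD sigma_lincomb -(addrA _ _ (sigma_row _)) opprD addrACA lincombB fB fD f_sigma.
move/eqP: fvE; rewrite -subr_eq eq_sym -fB => /eqP/lincomb_eq_f/eqP.
by rewrite subr_eq0 => /eqP.
Qed.

Lemma fixed_ker_coord {c} :
  c^tau *m B = c -> exists2 v, ker_mod_sm1 tau f v & ker_coord v c.
Proof.
move=> c_fixed; exists (lincomb U c^tau).
  by exists (lincomb w c); rewrite smulXsub1 sigma_lincomb c_fixed addrC addKr.
by exists (lincomb w c); [rewrite sigma_lincomb c_fixed addrC addKr | exists 0; rewrite f0 addr0].
Qed.

Lemma ker_coord_cong {v v' c c'} : ker_coord v c -> ker_coord v' c' ->
  c = c' <-> cong_mod_sm1 tau v v'.
Proof.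
case=> h fv [u hE] [h' fv' [u' hE']]; split.
  move=> cc'; exists (u - u'); rewrite smulXsub1; apply: f_inj.
  have hh : h - h' = f (u - u') by rewrite hE hE' cc' fB opprD addrACA subrr add0r.
  by rewrite fB fv fv' subrACA -sigma_rowB hh [RHS]fB f_sigma.
case=> u0; rewrite smulXsub1 => e.
have /sigma_row_fixed/eqP : sigma_row (h - h' - f u0) = h - h' - f u0.
  apply/eqP; rewrite -subr_eq0 !sigma_rowB subrACA (subrACA (sigma_row h)).
  by rewrite -fv -fv' -f_sigma -fB e fB subrr.
rewrite subr_eq0 subr_eq hE hE' [f u0 + _]addrC -addrA -fD => /eqP.
by case/lincomb_f_inj.
Qed.

Lemma unitmx_of_mod_sigma_bijective : mod_sigma_bijective tau f -> B \in unitmx.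
Proof.
case=> sigma_inj _; apply: contraT => B_sing.
have /rowV0Pn [d /sub_kermxP dB d_neq0] : kermx B != 0 by rewrite kermx_eq0 row_free_unit.
pose c := d^frob.
have sigma_c : sigma_row (lincomb w c) = f (lincomb U c^tau).
  by rewrite sigma_lincomb map_mx_frobK dB lincomb0 add0r.
have [u' u'E] : in_aH tau 'X (lincomb U c^tau - 0).
  by apply: sigma_inj; exists (lincomb w c); rewrite f0 subr0 smulX sigma_c.
move: u'E; rewrite subr0 smulX => u'E.
have : sigma_row (lincomb w c - f u') = 0 by rewrite sigma_rowB sigma_c u'E f_sigma subrr.
move/sigma_row_eq0/eqP; rewrite subr_eq0 => /eqP/lincomb_eq_f c0.
by move: d_neq0; rewrite -(map_mx_frobK _ _ d) -/c c0 map_mx0 eqxx.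
Qed.

Lemma mod_sigma_bijective_of_unitmx : B \in unitmx -> mod_sigma_bijective tau f.
Proof.
move=> B_unit; split=> [v v' [h]|x].
  rewrite smulX => fvv'; have [c [u hE]] := decomp h.
  have : lincomb w (c^tau *m B) + f (lincomb U c^tau + sigma_row u) = lincomb w 0 + f (v - v').
    by rewrite lincomb0 add0r fB fvv' hE sigma_rowD sigma_lincomb fD f_sigma addrA.
  case/lincomb_f_inj => cB0 <-; exists u; rewrite smulX.
  have -> : c^tau = 0 by rewrite -(mulmxK B_unit c^tau) cB0 mul0mx.
  by rewrite lincomb0 add0r.
have [c [v ->]] := decomp x; pose d := (c *m invmx B)^frob.
have dB : d^tau *m B = c by rewrite map_mx_frobK mulmxKV.
exists (v - lincomb U d^tau), (lincomb w d).
by rewrite smulX sigma_lincomb dB fB opprB addrA (addrAC (lincomb w c)) addrK.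
Qed.

Lemma ker_mod_sm1_family_le {m} {x : 'I_m -> 'rV_r0} :
  (forall i, ker_mod_sm1 tau f (x i)) ->
  (forall i j, i != j -> ~ cong_mod_sm1 tau (x i) (x j)) -> (m <= q ^ \rank B)%N.
Proof.
move=> x_ker x_cong.
have /fin_all_exists [c cE] : forall i, exists c, c^tau *m B = c /\ ker_coord (x i) c.
  by move=> i; have [c c_fixed x_c] := ker_coord_fixed (x_ker i); exists c.
apply: (@card_tau_fixed_rows_le _ _ _ c) => [i|i j c_ij]; first by case: (cE i).
have [//|ij] := eqVneq i j; exfalso; apply: (x_cong i j ij).
exact/(ker_coord_cong (cE i).2 (cE j).2).
Qed.

Lemma ker_mod_sm1_family_unitmx : B \in unitmx ->
  exists x : 'I_(q ^ n) -> 'rV_r0, (forall i, ker_mod_sm1 tau f (x i)) /\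
    (forall i j, i != j -> ~ cong_mod_sm1 tau (x i) (x j)).
Proof.
move=> B_unit; have [c [c_fixed c_inj]] := exists_tau_fixed_rows B_unit.
have /fin_all_exists [x xE] : forall i, exists v, ker_mod_sm1 tau f v /\ ker_coord v (c i).
  by move=> i; have [v v_ker v_c] := fixed_ker_coord (c_fixed i); exists v.
exists x; split=> [i|i j /eqP ij x_ij]; first by case: (xE i).
by apply/ij/c_inj/(ker_coord_cong (xE i).2 (xE j).2).
Qed.

Lemma ker_mod_sm1_quot_card :
  quot_card_le (ker_mod_sm1 tau f) (@cong_mod_sm1 K tau r0) (q ^ n)%N /\
  (quot_card_eq (ker_mod_sm1 tau f) (@cong_mod_sm1 K tau r0) (q ^ n)%N
     <-> mod_sigma_bijective tau f).
Proof.
have le_rank : (q ^ \rank B <= q ^ n)%N by rewrite leq_exp2l ?card_finField_gt1 ?rank_leq_row.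
have card_le : quot_card_le (ker_mod_sm1 tau f) (@cong_mod_sm1 K tau r0) (q ^ n)%N.
  by move=> m x x_ker x_cong; apply: leq_trans (ker_mod_sm1_family_le x_ker x_cong) le_rank.
split=> //; split=> [[_ [x [x_ker x_cong]]]|/unitmx_of_mod_sigma_bijective B_unit].
  apply: mod_sigma_bijective_of_unitmx; rewrite -row_free_unit /row_free eqn_leq rank_leq_row.
  by rewrite -(leq_exp2l _ _ card_finField_gt1) (ker_mod_sm1_family_le x_ker x_cong).
by split=> //; apply: ker_mod_sm1_family_unitmx.
Qed.

End SigmaMatrix.

End Cokernel.

End InverseFrobenius.

Theorem lemma4
  (F : finFieldType)                          (* F = F_q, q = #|F| *)
  (K : closedFieldType)                       (* K = kbar *)
  (iota : {rmorphism {fraction {poly F}} -> K})   (* k = F_q(T) -> kbar *)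
  (Kalg : forall x : K, exists p : {poly {fraction {poly F}}},
            p != 0 /\ root (map_poly iota p) x)
  (tau : K -> K) (Htau : forall x : K, tau x ^+ #|F| = x)   (* tau x = x^(1/q) *)
  (r0 r1 : nat) (f : 'rV[{poly K}]_r0 -> 'rV[{poly K}]_r1)
  (Hf : skew_hom tau f) (Hinj : injective f)
  (n : nat) (Hn : coker_dim f n) :
  quot_card_le (ker_mod_sm1 tau f) (@cong_mod_sm1 K tau r0) (#|F| ^ n)%N /\
  (quot_card_eq (ker_mod_sm1 tau f) (@cong_mod_sm1 K tau r0) (#|F| ^ n)%N
     <-> mod_sigma_bijective tau f).
Proof.
have [w [w_span w_free]] := Hn.
have [B [U sigma_w]] := exists_sigma_matrix (tau := tau) w_span.
pose g : {rmorphism F -> K} := iota \o @tofrac _ \o polyC.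
exact: (ker_mod_sm1_quot_card g Htau Hf Hinj w_span w_free sigma_w).
Qed.
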